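(* Let $p$ be a prime and let $c_1,c_2,\lambda\in\mathbf{Q}_p$ with $c_2\neq 0$ and $\lambda\neq 0$. Let $(a_n)_{n\ge 0}$ be the sequence $a_n=(c_1+c_2 n)\lambda^n$, and let $K$ be its Kepler set. Then $$K=\begin{cases}\lambda\left(1+\dfrac{c_2}{c_1}+\left(\dfrac{c_2}{c_1}\right)^2\mathbf{Z}_p\right), & |c_1|_p>|c_2|_p,\\[2mm] \mathbf{Q}_p\setminus \lambda\left(1+p\mathbf{Z}_p\right), & |c_1|_p\le |c_2|_p.\end{cases}$$
   Context: The Kepler set of a sequence $(a_n)_{n\ge0}$ in $\mathbf{Q}_p$ is the closure in $\mathbf{Q}_p$ of the set of consecutive ratios $\{a_{n+1}/a_n : n\ge 0,\ a_n\neq 0\}$. For $x\in\mathbf{Q}_p$ and a set $A\subseteq\mathbf{Q}_p$, $xA=\{xa:a\in A\}$ and $x+A=\{x+a:a\in A\}$. *)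

(* Such (F, v) is unique up
   to isometric isomorphism, i.e. it IS Q_p. *)
From mathcomp Require Import all_boot all_order all_algebra.
From mathcomp Require Import reals.
Set Implicit Arguments. Unset Strict Implicit. Unset Printing Implicit Defensive.
Import Order.TTheory GRing.Theory Num.Theory.
Local Open Scope ring_scope.

Definition padic_abs (R : realType) (p : nat) (q : rat) : R :=
  if q == 0 then 0
  else (p%:R ^+ logn p `|denq q|%N) / (p%:R ^+ logn p `|numq q|%N).

Record is_Qp (p : nat) (R : realType) (F : fieldType) (v : F -> R) : Prop := {
  Qp_ge0 : forall x, 0 <= v x;
  Qp_eq0 : forall x, v x = 0 -> x = 0;
  Qp_mul : forall x y, v (x * y) = v x * v y;
  Qp_ultra : forall x y, v (x + y) <= Num.max (v x) (v y);
  Qp_rat : forall q : rat, v (ratr q) = padic_abs R p q;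
  Qp_dense : forall x e, 0 < e -> exists q : rat, v (x - ratr q) < e;
  Qp_complete : forall u : nat -> F,
    (forall e, 0 < e -> exists N, forall m n, (N <= m)%N -> (N <= n)%N ->
        v (u m - u n) < e) ->
    exists l, forall e, 0 < e -> exists N, forall n, (N <= n)%N -> v (u n - l) < e
}.

(* Kepler set: closure (for the metric d(x,y) = v (x - y)) of the set of
   consecutive ratios a (n+1) / a n with a n <> 0 *)
Definition kepler_set (R : realType) (F : fieldType) (v : F -> R)
  (a : nat -> F) (x : F) : Prop :=
  forall e, 0 < e -> exists n, a n != 0 /\ v (x - a n.+1 / a n) < e.

Definition in_Zp (R : realType) (F : fieldType) (v : F -> R) (z : F) : Prop :=
  v z <= 1.

(* Writing a_n = b_n lam^n with b_n = c1 + c2 n, the ratios are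
   lam (1 + c2 / b_n), so one has to compute the closure of the points
   c2 / b_n.  The one analytic input is that N is dense in Z_p.

   If |c1| > |c2|, put s = c2 / c1: then c2 / b_n = s - s^2 n / (1 + s n),
   and since w |-> - w / (1 + s w) is an involution of Z_p, the points
   - n / (1 + s n) are dense in Z_p, so the closure is s + s^2 Z_p.

   If |c1| <= |c2|, put t = c1 / c2 in Z_p: then c2 / b_n = 1 / (t + n), and
   t + N is dense in Z_p, so the closure is {w : |w| >= 1}, which by
   discreteness of the value group is the complement of p Z_p. *)

From mathcomp Require Import all_boot all_order all_algebra.
From mathcomp Require Import reals.
From mathcomp Require Import ring lra.
Set Implicit Arguments. Unset Strict Implicit. Unset Printing Implicit Defensive.
Import Order.TTheory GRing.Theory Num.Theory.
Local Open Scope ring_scope.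

Section PadicAbsoluteValue.
Variables (p : nat) (R : realType) (F : fieldType) (v : F -> R).
Hypotheses (hp : prime p) (hF : is_Qp p v).

Lemma v_ge0 x : 0 <= v x. Proof. exact: Qp_ge0 hF x. Qed.

Lemma vM x y : v (x * y) = v x * v y. Proof. exact: Qp_mul hF x y. Qed.

Lemma v0 : v 0 = 0.
Proof. by have := Qp_rat hF 0%:R; rewrite ratr_nat /padic_abs eqxx. Qed.

Lemma v1 : v 1 = 1.
Proof.
by have := Qp_rat hF 1%:R; rewrite ratr_nat /padic_abs oner_eq0 logn1 expr0 divr1.
Qed.

Lemma v_eq0 x : (v x == 0) = (x == 0).
Proof. by apply/eqP/eqP => [/(Qp_eq0 hF) | ->]; last exact: v0. Qed.

Lemma v_gt0 x : x != 0 -> 0 < v x.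
Proof. by move=> x0; rewrite lt_def v_eq0 x0 v_ge0. Qed.

Lemma vN x : v (- x) = v x.
Proof.
have vN1 : v (-1) = 1.
  have : v (-1) * v (-1) = 1 by rewrite -vM mulrNN mulr1 v1.
  by have := v_ge0 (-1); nra.
by rewrite -mulN1r vM vN1 mul1r.
Qed.

Lemma v_distC x y : v (x - y) = v (y - x).
Proof. by rewrite -vN opprB. Qed.

Lemma vV x : v x^-1 = (v x)^-1.
Proof.
have [-> | x0] := eqVneq x 0; first by rewrite invr0 v0 invr0.
apply: (mulfI (lt0r_neq0 (v_gt0 x0))).
by rewrite -vM mulfV // v1 mulfV // v_eq0.
Qed.

Lemma v_div x y : v (x / y) = v x / v y.
Proof. by rewrite vM vV. Qed.

Lemma vD_le x y e : v x <= e -> v y <= e -> v (x + y) <= e.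
Proof. by move=> hx hy; rewrite (le_trans (Qp_ultra hF x y)) // ge_max hx hy. Qed.

Lemma vD_lt x y e : v x < e -> v y < e -> v (x + y) < e.
Proof. by move=> hx hy; rewrite (le_lt_trans (Qp_ultra hF x y)) // gt_max hx hy. Qed.

Lemma vD_eqr x y : v x < v y -> v (x + y) = v y.
Proof.
move=> lt_xy; apply/eqP; rewrite eq_le vD_le ?(ltW lt_xy) //=.
have := Qp_ultra hF (x + y) (- x); rewrite addrC addKr vN le_max.
by case/orP=> // /(lt_le_trans lt_xy); rewrite ltxx.
Qed.

Lemma v_nat_le1 n : v n%:R <= 1.
Proof. by elim: n => [|n ih]; rewrite ?v0 // mulrS vD_le ?v1. Qed.

Lemma v_unitD1 x : v x < 1 -> v (1 + x) = 1.
Proof. by move=> x_lt1; rewrite addrC vD_eqr v1. Qed.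

Lemma ball_mulZp c d x : d != 0 ->
  v (x - c) <= v d <-> exists z, in_Zp v z /\ x = c + d * z.
Proof.
move=> d0; split => [x_near | [z [z1 ->]]].
  exists ((x - c) / d); split; last by rewrite mulrC divfK // addrC subrK.
  by rewrite /in_Zp v_div ler_pdivrMr ?v_gt0 // mul1r.
by rewrite addrC addKr vM ler_piMr ?v_ge0.
Qed.

Lemma scaled_ball_mulZp lam c d x : lam != 0 -> d != 0 ->
  v (x / lam - c) <= v d <-> exists z, in_Zp v z /\ x = lam * (c + d * z).
Proof.
move=> lam0 d0; rewrite ball_mulZp //.
split=> -[z [z1 xz]]; exists z; split=> //.
  by rewrite -xz mulrC divfK.
by rewrite xz mulrC mulKf.
Qed.

Lemma p_gt1 : 1 < (p%:R : R). Proof. by rewrite ltr1n prime_gt1. Qed.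

Lemma p_gt0 : 0 < (p%:R : R). Proof. by rewrite ltr0n prime_gt0. Qed.

Lemma pX_gt0 k : 0 < (p%:R : R) ^+ k.
Proof. by rewrite exprn_gt0 // p_gt0. Qed.

Lemma pX_inv_gt0 k : 0 < (p%:R ^+ k : R)^-1.
Proof. by rewrite invr_gt0 pX_gt0. Qed.

Lemma v_ratr q : q != 0 ->
  v (ratr q) = (p%:R ^+ logn p `|denq q|) / (p%:R ^+ logn p `|numq q|).
Proof. by move=> q0; rewrite (Qp_rat hF) /padic_abs (negbTE q0). Qed.

Lemma v_int m : m != 0 -> v m%:~R = (p%:R ^+ logn p `|m|)^-1.
Proof.
move=> m0; rewrite -ratr_int v_ratr ?intq_eq0 // denq_int numq_int.
by rewrite logn1 expr0 div1r.
Qed.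

Lemma v_int_dvd m k : (p ^ k %| `|m|)%N -> v m%:~R <= (p%:R ^+ k)^-1.
Proof.
have [-> _ | m0 pk_m] := eqVneq m 0; first by rewrite v0 invr_ge0 ltW ?pX_gt0.
rewrite v_int // lef_pV2 ?posrE ?pX_gt0 // ler_eXn2l ?p_gt1 //.
by rewrite -pfactor_dvdn // absz_gt0.
Qed.

Lemma v_int_coprime m : ~~ (p %| `|m|)%N -> v m%:~R = 1.
Proof.
move=> p_m; have m0 : m != 0 by apply: contraNneq p_m => ->.
by rewrite v_int // logn_coprime ?prime_coprime // expr0 invr1.
Qed.

Lemma v_natp : v p%:R = (p%:R)^-1.
Proof.
rewrite -[p%:R]/((p%:Z)%:~R) v_int ?eqz_nat -?lt0n ?prime_gt0 //.
by rewrite absz_nat -[X in logn p X]expn1 pfactorK.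
Qed.

Lemma v_lt1E x : (v x < 1) = (v x <= (p%:R)^-1).
Proof.
apply/idP/idP => [x_lt1 | x_le]; last first.
  by rewrite (le_lt_trans x_le) // invf_lt1 ?p_gt0 ?p_gt1.
have [-> | x0] := eqVneq x 0; first by rewrite v0 invr_ge0 ler0n.
have [q xq] := Qp_dense hF x (v_gt0 x0).
have vq : v (ratr q) = v x by rewrite -[ratr q](subrK x) vD_eqr // v_distC.
have q0 : q != 0.
  by apply: contra_neq x0 => q0; apply/eqP; rewrite -v_eq0 -vq q0 (ratr_nat _ 0) v0.
move: x_lt1; rewrite -vq v_ratr // ltr_pdivrMr ?pX_gt0 // mul1r ltr_eXn2l ?p_gt1 //.
rewrite ler_pdivrMr ?pX_gt0 // mulrC ler_pdivlMr ?p_gt0 //.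
by rewrite -exprSr ler_eXn2l ?p_gt1.
Qed.

Lemma pX_inv_lt e : 0 < e -> exists k, (p%:R ^+ k : R)^-1 < e.
Proof.
move=> e0; have e_inv_ge0 : 0 <= e^-1 by rewrite invr_ge0 ltW.
exists (Num.Def.archi_bound e^-1).
rewrite -[X in _ < X]invrK ltf_pV2 ?posrE ?invr_gt0 ?pX_gt0 //.
apply: lt_le_trans (archi_boundP e_inv_ge0) _.
by rewrite -natrX ler_nat ltnW // ltn_expl // prime_gt1.
Qed.

Lemma ratr_Zp_den_ndvd q : v (ratr q) <= 1 -> ~~ (p %| `|denq q|)%N.
Proof.
apply: contraTN => p_den; rewrite -ltNge.
have q0 : q != 0 by apply: contraTneq p_den => ->; rewrite dvdn1 gtn_eqF ?prime_gt1.
have p_num : ~~ (p %| `|numq q|)%N.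
  apply: contraL (coprime_num_den q) => p_num; apply/negP => /eqP gcd1.
  have := dvdn_gcd p `|numq q| `|denq q|.
  by rewrite p_num p_den gcd1 dvdn1 gtn_eqF ?prime_gt1.
rewrite v_ratr // (logn_coprime (m := `|numq q|%N)) ?prime_coprime // expr0 divr1.
by rewrite exprn_egt1 ?p_gt1 // -lt0n -pfactor_dvdn ?expn1 // absz_gt0 denq_neq0.
Qed.

(* m is numq q * (denq q)^-1 modulo p^k, computed from a Bezout relation. *)
Lemma ratr_nat_approx q k : ~~ (p %| `|denq q|)%N ->
  exists m : nat, v (ratr q - m%:R) <= (p%:R ^+ k)^-1.
Proof.
move=> p_den; set N := numq q; set D := denq q; set pk : int := (p ^ k)%N.
have pk0 : pk != 0 by rewrite eqz_nat -lt0n expn_gt0 prime_gt0.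
have /coprimezP[[u1 u2] /= bezout] : coprimez D pk.
  by rewrite coprimezE absz_nat coprime_sym coprimeXl // prime_coprime.
set m := ((N * u1) %% pk)%Z.
exists `|m|%N; have m_ge0 : 0 <= m by apply: modz_ge0.
have pk_dvd : (p ^ k %| `|(N - m * D)%R|)%N.
  have E := divz_eq (N * u1) pk; set Q := (_ %/ _)%Z in E.
  have -> : N - m * D = pk * (N * u2 + Q * D).
    have -> : m = N * u1 - Q * pk by rewrite E; ring.
    by rewrite -{1}[N]mulr1 -bezout; ring.
  by rewrite abszM absz_nat dvdn_mulr.
have vD : v D%:~R = 1 by apply: v_int_coprime.
have D0 : (D%:~R : F) != 0 by rewrite -v_eq0 vD oner_eq0.
have -> : ratr q - `|m|%N%:R = (N - m * D)%:~R / D%:~R :> F.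
  by rewrite pmulrn gez0_abs // /ratr intrB intrM; field.
by rewrite v_div vD divr1 v_int_dvd.
Qed.

Lemma nat_dense_Zp x e : in_Zp v x -> 0 < e -> exists n : nat, v (x - n%:R) < e.
Proof.
move=> x1 e0; have [k pk_e] := pX_inv_lt e0.
have [q xq] := Qp_dense hF x (pX_inv_gt0 k).
have pk_le1 : (p%:R ^+ k : R)^-1 <= 1.
  by rewrite invf_le1 ?pX_gt0 ?exprn_ege1 ?ltW ?p_gt1.
have q1 : v (ratr q) <= 1.
  by rewrite -[ratr q](subKr x) vD_le // vN (le_trans (ltW xq)).
have [m qm] := ratr_nat_approx k (ratr_Zp_den_ndvd q1).
exists m; rewrite -[x](subrK (ratr q)) -addrA.
by apply: le_lt_trans pk_e; rewrite vD_le // ltW.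
Qed.

Lemma kepler_set_geometric (b : nat -> F) lam x : lam != 0 ->
  kepler_set v (fun n => b n * lam ^+ n) x <-> kepler_set v b (x / lam).
Proof.
move=> lam0; have vlam := v_gt0 lam0.
have ab0 n : (b n * lam ^+ n != 0) = (b n != 0).
  by rewrite mulf_eq0 expf_eq0 (negbTE lam0) andbF orbF.
have ratio n : b n != 0 ->
    v (x - b n.+1 * lam ^+ n.+1 / (b n * lam ^+ n)) =
    v lam * v (x / lam - b n.+1 / b n).
  by move=> bn0; rewrite -vM; congr v; rewrite exprS; field; rewrite bn0 lam0 expf_neq0.
split=> kx e e0.
- have [n [bn0 near]] := kx (e * v lam) (mulr_gt0 e0 vlam).
  by exists n; move: bn0 near; rewrite ab0 => bn0; rewrite ratio // mulrC ltr_pM2r.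
- have [n [bn0 near]] := kx (e / v lam) (divr_gt0 e0 vlam).
  by exists n; rewrite ab0 ratio // mulrC -ltr_pdivlMr.
Qed.

Lemma kepler_set_closed_ball (a : nat -> F) c r y :
    (forall n, a n != 0 -> v (a n.+1 / a n - c) <= r) ->
  kepler_set v a y -> v (y - c) <= r.
Proof.
move=> ball ky; rewrite leNgt; apply/negP => r_lt.
have [n0 [an0_0 _]] := ky 1 ltr01.
have r_ge0 := le_trans (v_ge0 _) (ball n0 an0_0).
have [n [an0 near]] := ky _ (le_lt_trans r_ge0 r_lt).
have : v ((y - a n.+1 / a n) + (a n.+1 / a n - c)) < v (y - c).
  by rewrite vD_lt // (le_lt_trans (ball n an0) r_lt).
by rewrite addrA subrK ltxx.
Qed.

Lemma kepler_set_outside_ball (a : nat -> F) c r y :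
    (forall n, a n != 0 -> r <= v (a n.+1 / a n - c)) ->
  kepler_set v a y -> r <= v (y - c).
Proof.
move=> outside ky; rewrite leNgt; apply/negP => lt_r.
have [n [an0 near]] := ky _ (le_lt_trans (v_ge0 _) lt_r).
have : v (- (y - a n.+1 / a n) + (y - c)) < r by rewrite vD_lt ?vN.
by rewrite opprB addrA subrK ltNge outside.
Qed.

Lemma kepler_set_affine_dominant c1 c2 y : c2 != 0 -> v c2 < v c1 ->
  kepler_set v (fun n : nat => c1 + c2 * n%:R) y <->
  v (y - (1 + c2 / c1)) <= v ((c2 / c1) ^+ 2).
Proof.
move=> c2_0 lt_c.
have c1_0 : c1 != 0 by rewrite -v_eq0 gt_eqF // (le_lt_trans (v_ge0 _) lt_c).
set s := c2 / c1; have s_lt1 : v s < 1 by rewrite v_div ltr_pdivrMr ?v_gt0 // mul1r.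
have c2E : c2 = s * c1 by rewrite divfK.
clearbody s; subst c2.
have s0 : s != 0 by apply: contraNneq c2_0 => ->; rewrite mul0r.
have unit m : v m <= 1 -> v (1 + s * m) = 1.
  by move=> m1; rewrite v_unitD1 // vM (le_lt_trans _ s_lt1) // ler_piMr ?v_ge0.
have sn0 n : 1 + s * n%:R != 0 by rewrite -v_eq0 unit ?v_nat_le1 ?oner_eq0.
have b0 n : c1 + s * c1 * n%:R != 0.
  by rewrite (_ : _ + _ = c1 * (1 + s * n%:R)) ?mulf_neq0 //; ring.
have ratio n :
    (c1 + s * c1 * n.+1%:R) / (c1 + s * c1 * n%:R) =
    s ^+ 2 * (- n%:R / (1 + s * n%:R)) + (1 + s).
  by rewrite mulrS; field; rewrite sn0 b0.
split.
- apply: kepler_set_closed_ball => n _.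
  rewrite ratio addrK vM ler_piMr ?v_ge0 //.
  by rewrite v_div vN unit ?v_nat_le1 // divr1 v_nat_le1.
- case/(ball_mulZp _ _ (expf_neq0 2 s0)) => z [z1 ->] e e0.
  have sz1 := unit z z1.
  have sz0 : 1 + s * z != 0 by rewrite -v_eq0 sz1 oner_eq0.
  have w1 : in_Zp v (- z / (1 + s * z)) by rewrite /in_Zp v_div vN sz1 divr1.
  have [n near] := nat_dense_Zp w1 e0.
  exists n; rewrite ratio; split; first exact: b0.
  have -> : 1 + s + s ^+ 2 * z - (s ^+ 2 * (- n%:R / (1 + s * n%:R)) + (1 + s)) =
      s ^+ 2 * (n%:R - - z / (1 + s * z)) * ((1 + s * z) / (1 + s * n%:R)).
    by field; rewrite sz0 sn0.
  rewrite !vM vV sz1 unit ?v_nat_le1 // invr1 !mulr1 (le_lt_trans _ near) //.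
  by rewrite v_distC ler_piMl ?v_ge0 // mulr_ile1 ?v_ge0 // ltW.
Qed.

Lemma kepler_set_affine_nondominant c1 c2 y : c2 != 0 -> v c1 <= v c2 ->
  kepler_set v (fun n : nat => c1 + c2 * n%:R) y <-> 1 <= v (y - 1).
Proof.
move=> c2_0 le_c; set t := c1 / c2.
have t1 : in_Zp v t by rewrite /in_Zp v_div ler_pdivrMr ?v_gt0 // mul1r.
have c1E : c1 = t * c2 by rewrite divfK.
clearbody t; subst c1.
have b0 n : (t * c2 + c2 * n%:R != 0) = (t + n%:R != 0).
  by rewrite (_ : _ + _ = c2 * (t + n%:R)) ?mulf_eq0 ?(negbTE c2_0) //; ring.
have ratio n : t + n%:R != 0 ->
    (t * c2 + c2 * n.+1%:R) / (t * c2 + c2 * n%:R) = (t + n%:R)^-1 + 1.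
  by move=> tn0; rewrite mulrS; field; rewrite tn0 b0.
split.
- apply: kepler_set_outside_ball => n; rewrite b0 => tn0.
  by rewrite ratio // addrK vV invf_ge1 ?v_gt0 // vD_le ?v_nat_le1.
- move=> y1 e e0.
  have y_gt0 : 0 < v (y - 1) := lt_le_trans ltr01 y1.
  have y0 : y - 1 != 0 by rewrite -v_eq0 gt_eqF.
  set w := (y - 1)^-1.
  have vw : v w = (v (y - 1))^-1 := vV _.
  have w_gt0 : 0 < v w by rewrite vw invr_gt0.
  have wt1 : in_Zp v (w - t) by rewrite /in_Zp vD_le ?vN // vw invf_le1.
  (* The first bound forces v (t + n) = v w, the second then bounds the inverses. *)
  have min_gt0 : 0 < Num.min (v w) (e * v w ^+ 2).
    by rewrite lt_min w_gt0 mulr_gt0 ?exprn_gt0.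
  have [n] := nat_dense_Zp wt1 min_gt0.
  rewrite lt_min => /andP[near_w near_e].
  have tn_w : v (t + n%:R - w) = v (w - t - n%:R) by rewrite v_distC opprD addrA.
  have v_tn : v (t + n%:R) = v w by rewrite -(subrK w (t + n%:R)) vD_eqr // tn_w.
  have tn0 : t + n%:R != 0 by rewrite -v_eq0 v_tn gt_eqF.
  exists n; rewrite b0 ratio //; split=> //.
  have -> : y - ((t + n%:R)^-1 + 1) = (t + n%:R - w) / (w * (t + n%:R)).
    by rewrite /w; field; rewrite y0 tn0.
  by rewrite v_div vM v_tn tn_w ltr_pdivrMr ?mulr_gt0 // -expr2.
Qed.

End PadicAbsoluteValue.

Theorem theorem1 (p : nat) (R : realType) (F : fieldType) (v : F -> R)
  (hp : prime p) (hF : is_Qp p v) (c1 c2 lam : F)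
  (hc2 : c2 != 0) (hlam : lam != 0) :
  let a := fun n : nat => (c1 + c2 * n%:R) * lam ^+ n in
  (v c2 < v c1 ->
     forall x, kepler_set v a x <->
       exists z, in_Zp v z /\ x = lam * (1 + c2 / c1 + (c2 / c1) ^+ 2 * z)) /\
  (v c1 <= v c2 ->
     forall x, kepler_set v a x <->
       ~ (exists z, in_Zp v z /\ x = lam * (1 + p%:R * z))).
Proof.
move=> a; split=> [lt_c | le_c] x.
all: apply: iff_trans (kepler_set_geometric hF _ _ hlam) _.
- have c1_0 : c1 != 0 by rewrite -(v_eq0 hF) gt_eqF // (le_lt_trans (v_ge0 hF _) lt_c).
  apply: iff_trans (kepler_set_affine_dominant hp hF _ hc2 lt_c) _.
  have d0 : (c2 / c1) ^+ 2 != 0 by rewrite expf_neq0 // mulf_neq0 ?invr_neq0.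
  exact (scaled_ball_mulZp hF (1 + c2 / c1) x hlam d0).
- have p0 : p%:R != 0 :> F by rewrite -(v_eq0 hF) (v_natp hp hF) invr_eq0 gt_eqF ?p_gt0.
  apply: iff_trans (kepler_set_affine_nondominant hp hF _ hc2 le_c) _.
  apply: iff_trans (not_iff_compat (scaled_ball_mulZp hF _ _ hlam p0)).
  by rewrite (v_natp hp hF) -(v_lt1E hp hF) leNgt; split=> /negP.
Qed.
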